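(* Let $\mathcal{W}\subseteq\{x\in\mathbb{R}^d:\|x\|_2\le1\}$ be closed convex with $0\in\mathcal{W}$, let $f_1,\dots,f_T$ be convex differentiable with $L$-Lipschitz gradients on $\mathcal{W}$, set $f_0\equiv0$, $x_0=z_0=0$, fix $\eta>0$, and for $t=1,\dots,T$ let $$x_t=\arg\min_{x\in\mathcal{W}}\Bigl\{\langle x,\nabla f_{t-1}(x_{t-1})\rangle+\tfrac{L}{2\eta}\|x-z_{t-1}\|_2^2\Bigr\},\qquad z_t=\arg\min_{x\in\mathcal{W}}\Bigl\{\langle x,\nabla f_t(x_t)\rangle+\tfrac{L}{2\eta}\|x-z_{t-1}\|_2^2\Bigr\}.$$ Let $\mathrm{EGV}_{T,2}=\sum_{t=0}^{T-1}\|\nabla f_{t+1}(x_t)-\nabla f_t(x_t)\|_2^2$. If $\eta=\frac12\min\{1/\sqrt2,\,L/\sqrt{\mathrm{EGV}_{T,2}}\}$, then $$\sum_{t=1}^T f_t(x_t)-\min_{x\in\mathcal{W}}\sum_{t=1}^T f_t(x)\le 2\max\{\sqrt2 L,\sqrt{\mathrm{EGV}_{T,2}}\}.$$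
   Context: The pair of updates is the online mirror prox (OMP) algorithm with Euclidean geometry; $x_t$ is played before $f_t$ is revealed. $\mathrm{EGV}_{T,2}$ is computed along the run of the algorithm with the given $\eta$. *)

From Stdlib Require Import Reals.
Open Scope R_scope.

(* Vectors of R^d are represented as functions nat -> R; only the
   coordinates 0..d-1 matter, and a genuine point of R^d is one whose
   coordinates >= d vanish (predicate [inRd]). *)
Definition vec := nat -> R.

Definition inRd (d : nat) (x : vec) : Prop := forall i, (d <= i)%nat -> x i = 0.

Fixpoint sumR (n : nat) (f : nat -> R) : R :=
  match n with
  | O => 0
  | S m => sumR m f + f m
  end.

Definition vzero : vec := fun _ => 0.
Definition vadd (x y : vec) : vec := fun i => x i + y i.
Definition vsub (x y : vec) : vec := fun i => x i - y i.
Definition vscale (a : R) (x : vec) : vec := fun i => a * x i.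

Definition inner (d : nat) (x y : vec) : R := sumR d (fun i => x i * y i).
Definition norm2 (d : nat) (x : vec) : R := sqrt (inner d x x).

Definition W_convex_set (d : nat) (W : vec -> Prop) : Prop :=
  forall x y lam, W x -> W y -> 0 <= lam <= 1 ->
    W (vadd (vscale lam x) (vscale (1 - lam) y)).

Definition W_closed_set (d : nat) (W : vec -> Prop) : Prop :=
  forall (u : nat -> vec) (x : vec), (forall n, W (u n)) -> inRd d x ->
    (forall eps, eps > 0 -> exists N, forall n, (N <= n)%nat ->
        norm2 d (vsub (u n) x) < eps) ->
    W x.

Definition convex_fun (d : nat) (f : vec -> R) : Prop :=
  forall x y lam, inRd d x -> inRd d y -> 0 <= lam <= 1 ->
    f (vadd (vscale lam x) (vscale (1 - lam) y)) <= lam * f x + (1 - lam) * f y.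

Definition is_gradient (d : nat) (f : vec -> R) (g x : vec) : Prop :=
  forall eps, eps > 0 -> exists delta, delta > 0 /\
    forall y, inRd d y -> norm2 d (vsub y x) < delta ->
      Rabs (f y - f x - inner d g (vsub y x)) <= eps * norm2 d (vsub y x).

Definition is_argmin (W : vec -> Prop) (phi : vec -> R) (x : vec) : Prop :=
  W x /\ forall y, W y -> phi x <= phi y.

(* step size eta = 1/2 * min{1/sqrt 2, L / sqrt EGV}, with L / sqrt 0 = +infinity *)
Definition eta_choice (L EGV : R) : R :=
  if Rle_dec EGV 0 then / 2 * / sqrt 2
  else / 2 * Rmin (/ sqrt 2) (L / sqrt EGV).

From Stdlib Require Import Reals Lra Lia Psatz.
Open Scope R_scope.

(* Write c = L / (2 eta) and |.| for the Euclidean norm.  Both updates are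
   proximal steps x = prox(M; z) minimising <w, M> + c |w - z|^2, whose
   optimality condition gives the three-point inequality
   <x - w, M> <= c (|w - z|^2 - |w - x|^2 - |x - z|^2) on W, and two steps from
   the same centre differ by at most |M - M'| / (2 c).  Combining both for
   x_t and z_t with convexity f_t(x_t) - f_t(u) <= <g_t(x_t), x_t - u> and the
   Lipschitz bound on g_t gives the one-step estimate
     f_t(x_t) - f_t(u) + Phi_t <= Phi_(t-1) + |g_t(x_(t-1)) - g_(t-1)(x_(t-1))|^2 / c
   for the potential Phi_t = c (|u - z_t|^2 + |z_t - x_t|^2), as soon as
   c^2 >= 2 L^2.  Telescoping, the regret is at most Phi_0 + EGV / c <= c + EGV / c,
   and the choice of eta makes c = max (sqrt 2 L) (sqrt EGV) >= sqrt EGV. *)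

(* The identities below hold coordinatewise, so induction on the dimension
   reduces them to [field]; the left-hand side must be a single [inner]. *)
Ltac inner_identity d :=
  repeat match goal with H : _ |- _ => clear H end; intros;
  unfold inner, vsub, vadd, vscale, vzero;
  induction d as [|d IH]; simpl; [field | rewrite IH; field].

Lemma inner_self_nonneg d v : 0 <= inner d v v.
Proof. unfold inner; induction d; simpl; nra. Qed.

Lemma norm2_sqr d v : norm2 d v ^ 2 = inner d v v.
Proof. unfold norm2; rewrite <- Rsqr_pow2; apply Rsqr_sqrt, inner_self_nonneg. Qed.

Lemma inner_vzero d : inner d vzero vzero = 0.
Proof. inner_identity d. Qed.

Lemma inner_vsub_vzero d u v : inner d (vsub u vzero) (vsub v vzero) = inner d u v.
Proof. inner_identity d. Qed.

Lemma inner_self_le_one d u : norm2 d u <= 1 -> inner d u u <= 1.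
Proof.
  intros Hu. rewrite <- norm2_sqr.
  pose proof (sqrt_pos (inner d u u)). unfold norm2 in *. nra.
Qed.

Lemma inner_three_point d x z w :
  inner d (vsub x z) (vsub w x) =
  / 2 * (inner d (vsub w z) (vsub w z) - inner d (vsub w x) (vsub w x)
         - inner d (vsub x z) (vsub x z)).
Proof. inner_identity d. Qed.

Lemma inner_sub_sqr_le d p q r :
  inner d (vsub p r) (vsub p r)
  <= 2 * inner d (vsub p q) (vsub p q) + 2 * inner d (vsub q r) (vsub q r).
Proof.
  assert (Hpar : inner d (vsub p r) (vsub p r) =
    2 * inner d (vsub p q) (vsub p q) + 2 * inner d (vsub q r) (vsub q r)
    - inner d (vsub (vsub p q) (vsub q r)) (vsub (vsub p q) (vsub q r)))
    by inner_identity d.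
  pose proof (inner_self_nonneg d (vsub (vsub p q) (vsub q r))). lra.
Qed.

Lemma inner_le_of_coercive d a b k :
  0 < k -> k * inner d b b <= inner d a b -> inner d a b <= inner d a a / k.
Proof.
  intros Hk Hab.
  assert (Hsq : inner d (vsub a (vscale k b)) (vsub a (vscale k b)) =
    inner d a a - 2 * k * inner d a b + k ^ 2 * inner d b b) by inner_identity d.
  pose proof (inner_self_nonneg d (vsub a (vscale k b))).
  assert (Hkab : k * inner d a b <= inner d a a) by nra.
  apply Rmult_le_reg_l with k; [exact Hk|].
  replace (k * (inner d a a / k)) with (inner d a a) by (field; lra). exact Hkab.
Qed.

Lemma inRd_convex_comb d x u lam :
  inRd d x -> inRd d u -> inRd d (vadd (vscale lam u) (vscale (1 - lam) x)).
Proof. unfold inRd, vadd, vscale; intros Hx Hu i Hi; rewrite Hx, Hu by exact Hi; ring. Qed.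

Lemma convex_gradient_le d f gx x u :
  convex_fun d f -> is_gradient d f gx x -> inRd d x -> inRd d u ->
  f x - f u <= inner d gx (vsub x u).
Proof.
  intros Hconv Hgrad Hx Hu.
  set (N := norm2 d (vsub u x)). set (G := inner d gx (vsub x u)).
  assert (HN : 0 <= N) by apply sqrt_pos.
  apply Rle_plus_epsilon; intros eps Heps.
  destruct (Hgrad (eps / (N + 1))) as [delta [Hdelta Hnear]].
  { apply Rdiv_lt_0_compat; lra. }
  set (lam := delta / (delta + N + 1)).
  assert (Hlam : lam * (delta + N + 1) = delta) by (unfold lam; field; lra).
  assert (Hlam0 : 0 < lam) by (unfold lam; apply Rdiv_lt_0_compat; lra).
  assert (Hlam1 : lam <= 1) by nra.
  assert (Hdir : forall lam, inner d gx (vsub (vadd (vscale lam u) (vscale (1 - lam) x)) x)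
      = - lam * inner d gx (vsub x u)) by inner_identity d.
  assert (Hsq : forall lam, inner d (vsub (vadd (vscale lam u) (vscale (1 - lam) x)) x)
      (vsub (vadd (vscale lam u) (vscale (1 - lam) x)) x) = lam ^ 2 * inner d (vsub u x) (vsub u x))
    by inner_identity d.
  set (y := vadd (vscale lam u) (vscale (1 - lam) x)).
  assert (Hdist : norm2 d (vsub y x) = lam * N).
  { unfold N, norm2, y; rewrite Hsq, sqrt_mult_alt, sqrt_pow2 by (nra || apply pow2_ge_0).
    reflexivity. }
  pose proof (Hnear y (inRd_convex_comb d x u lam Hx Hu) ltac:(rewrite Hdist; nra)) as Hfirst.
  rewrite Hdist in Hfirst. unfold y in Hfirst. rewrite Hdir in Hfirst. fold G y in Hfirst.
  pose proof (Hconv u x lam Hu Hx ltac:(lra)) as Hchord. fold y in Hchord.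
  pose proof (Rle_abs (- (f y - f x - - lam * G))) as Habs. rewrite Rabs_Ropp in Habs.
  assert (Hsmall : eps / (N + 1) * N <= eps).
  { apply Rmult_le_reg_r with (N + 1); [lra|].
    replace (eps / (N + 1) * N * (N + 1)) with (eps * N) by (field; lra). nra. }
  assert (lam * (f x - f u) <= lam * (G + eps)) by nra.
  apply Rmult_le_reg_l with lam; lra.
Qed.

Definition is_prox (W : vec -> Prop) (d : nat) (M z : vec) (c : R) (x : vec) : Prop :=
  is_argmin W (fun w => inner d w M + c * norm2 d (vsub w z) ^ 2) x.

Lemma nonneg_of_perturbation V K :
  0 <= K -> (forall lam, 0 < lam <= 1 -> 0 <= V + lam * K) -> 0 <= V.
Proof.
  intros HK H.
  apply Rle_plus_epsilon; intros eps Heps.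
  set (lam := Rmin 1 (eps / (K + 1))).
  assert (Hlam0 : 0 < lam) by (apply Rmin_glb_lt; [lra | apply Rdiv_lt_0_compat; lra]).
  assert (Hlam1 : lam <= 1) by apply Rmin_l.
  assert (HlamK : lam * (K + 1) <= eps).
  { pose proof (Rmin_r 1 (eps / (K + 1))) as Hr. fold lam in Hr.
    apply Rle_trans with (eps / (K + 1) * (K + 1));
      [apply Rmult_le_compat_r; lra | right; field; lra]. }
  pose proof (H lam (conj Hlam0 Hlam1)). nra.
Qed.

Lemma prox_variational_ineq d W M z c x :
  W_convex_set d W -> 0 <= c -> is_prox W d M z c x ->
  forall w, W w -> 0 <= inner d (vsub w x) M + 2 * c * inner d (vsub x z) (vsub w x).
Proof.
  intros HW Hc [Wx Hmin] w Ww.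
  apply nonneg_of_perturbation with (c * inner d (vsub w x) (vsub w x)).
  { pose proof (inner_self_nonneg d (vsub w x)). nra. }
  intros lam Hlam.
  set (y := vadd (vscale lam w) (vscale (1 - lam) x)).
  pose proof (Hmin y (HW w x lam Ww Wx ltac:(lra))) as Hy. cbv beta in Hy.
  rewrite !norm2_sqr in Hy.
  assert (Hlin : inner d y M = inner d x M + lam * inner d (vsub w x) M)
    by (unfold y; inner_identity d).
  assert (Hquad : inner d (vsub y z) (vsub y z) = inner d (vsub x z) (vsub x z)
      + lam * (2 * inner d (vsub x z) (vsub w x) + lam * inner d (vsub w x) (vsub w x)))
    by (unfold y; inner_identity d).
  rewrite Hlin, Hquad in Hy.
  apply Rmult_le_reg_l with lam; lra.
Qed.

Lemma prox_three_point d W M z c x :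
  W_convex_set d W -> 0 <= c -> is_prox W d M z c x ->
  forall w, W w -> inner d (vsub x w) M <=
    c * (inner d (vsub w z) (vsub w z) - inner d (vsub w x) (vsub w x)
         - inner d (vsub x z) (vsub x z)).
Proof.
  intros HW Hc Hx w Ww.
  pose proof (prox_variational_ineq d W M z c x HW Hc Hx w Ww) as Hvi.
  rewrite inner_three_point in Hvi.
  assert (inner d (vsub x w) M = - inner d (vsub w x) M) by inner_identity d.
  lra.
Qed.

Lemma prox_stable d W M M' z c x x' :
  W_convex_set d W -> 0 < c -> is_prox W d M z c x -> is_prox W d M' z c x' ->
  inner d (vsub M' M) (vsub x x') <= inner d (vsub M' M) (vsub M' M) / (2 * c).
Proof.
  intros HW Hc Hx Hx'.
  pose proof (prox_variational_ineq d W M z c x HW ltac:(lra) Hx x' (proj1 Hx')) as Hvi.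
  pose proof (prox_variational_ineq d W M' z c x' HW ltac:(lra) Hx' x (proj1 Hx)) as Hvi'.
  apply inner_le_of_coercive; [lra|].
  assert (Hsum : inner d (vsub M' M) (vsub x x') =
    2 * c * inner d (vsub x x') (vsub x x')
    + (inner d (vsub x' x) M + 2 * c * inner d (vsub x z) (vsub x' x))
    + (inner d (vsub x x') M' + 2 * c * inner d (vsub x' z) (vsub x x')))
    by inner_identity d.
  lra.
Qed.

Lemma omp_step d W c L u xp zp x zt M Gp G :
  W_convex_set d W -> 0 < c -> 2 * L ^ 2 <= c ^ 2 -> 0 <= L -> W u ->
  is_prox W d M zp c x -> is_prox W d G zp c zt ->
  norm2 d (vsub G Gp) <= L * norm2 d (vsub x xp) ->
  inner d G (vsub x u) + c * (inner d (vsub u zt) (vsub u zt) + inner d (vsub zt x) (vsub zt x))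
  <= c * (inner d (vsub u zp) (vsub u zp) + inner d (vsub zp xp) (vsub zp xp))
     + inner d (vsub Gp M) (vsub Gp M) / c.
Proof.
  intros HW Hc HcL HL Wu Hx Hzt HG.
  pose proof (prox_three_point d W G zp c zt HW ltac:(lra) Hzt u Wu) as Hz3.
  pose proof (prox_three_point d W M zp c x HW ltac:(lra) Hx zt (proj1 Hzt)) as Hx3.
  pose proof (prox_stable d W M G zp c x zt HW Hc Hx Hzt) as Hstab.
  assert (Hdec : inner d G (vsub x u) =
    inner d (vsub zt u) G + inner d (vsub x zt) M + inner d (vsub G M) (vsub x zt))
    by inner_identity d.
  assert (HGsq : inner d (vsub G Gp) (vsub G Gp) <= L ^ 2 * inner d (vsub x xp) (vsub x xp)).
  { rewrite <- !norm2_sqr, <- Rpow_mult_distr. apply pow_incr. split; [apply sqrt_pos | exact HG]. }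
  pose proof (inner_sub_sqr_le d G Gp M) as HGM.
  pose proof (inner_sub_sqr_le d x zp xp) as Hxxp.
  pose proof (inner_self_nonneg d (vsub x zp)). pose proof (inner_self_nonneg d (vsub zp xp)).
  set (A := inner d (vsub x zp) (vsub x zp) + inner d (vsub zp xp) (vsub zp xp)) in *.
  set (E := inner d (vsub Gp M) (vsub Gp M)) in *.
  assert (HGM' : inner d (vsub G M) (vsub G M) <= 2 * c * (c * A + E / c)).
  { replace (2 * c * (c * A + E / c)) with (2 * c ^ 2 * A + 2 * E) by (field; lra).
    assert (L ^ 2 * inner d (vsub x xp) (vsub x xp) <= 2 * L ^ 2 * A) by (unfold A; nra).
    assert (0 <= A) by (unfold A; lra).
    nra. }
  assert (inner d (vsub G M) (vsub G M) / (2 * c) <= c * A + E / c).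
  { apply Rmult_le_reg_l with (2 * c); [lra|].
    replace (2 * c * (inner d (vsub G M) (vsub G M) / (2 * c))) with (inner d (vsub G M) (vsub G M))
      by (field; lra).
    exact HGM'. }
  unfold A in *. lra.
Qed.

Lemma sumR_nonneg n F : (forall s, 0 <= F s) -> 0 <= sumR n F.
Proof. intros H; induction n; simpl; [lra | pose proof (H n); lra]. Qed.

Lemma sumR_ext n F G : (forall s, F s = G s) -> sumR n F = sumR n G.
Proof. intros H; induction n; simpl; [reflexivity | rewrite IHn, H; reflexivity]. Qed.

Lemma sumR_div n F c : sumR n (fun s => F s / c) = sumR n F / c.
Proof. induction n; simpl; [| rewrite IHn]; unfold Rdiv; ring. Qed.

Lemma sumR_sub_le n F G H :
  (forall s, (s < n)%nat -> F s - G s <= H s) -> sumR n F - sumR n G <= sumR n H.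
Proof.
  induction n; simpl; intros Hs; [lra|].
  assert (sumR n F - sumR n G <= sumR n H) by (apply IHn; intros; apply Hs; lia).
  pose proof (Hs n (Nat.lt_succ_diag_r n)). lra.
Qed.

Lemma sumR_telescope_le n r P e :
  (forall s, (s < n)%nat -> r s + P (S s) <= P s + e s) ->
  sumR n r + P n <= P 0%nat + sumR n e.
Proof.
  induction n; simpl; intros Hs; [lra|].
  assert (sumR n r + P n <= P 0%nat + sumR n e) by (apply IHn; intros; apply Hs; lia).
  pose proof (Hs n (Nat.lt_succ_diag_r n)). lra.
Qed.

Lemma prox_weight_eta_choice L E :
  0 < L -> 0 <= E -> L / (2 * eta_choice L E) = Rmax (sqrt 2 * L) (sqrt E).
Proof.
  intros HL HE.
  assert (Hs2 : 0 < sqrt 2) by (apply sqrt_lt_R0; lra).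
  unfold eta_choice. destruct (Rle_dec E 0) as [HE0 | HE0].
  - replace E with 0 by lra. rewrite sqrt_0, Rmax_left by nra. field; lra.
  - assert (HsE : 0 < sqrt E) by (apply sqrt_lt_R0; lra).
    assert (Hcmp : / sqrt 2 <= L / sqrt E <-> sqrt E <= sqrt 2 * L).
    { unfold Rdiv.
      assert (Ha : / sqrt 2 * sqrt 2 = 1) by (field; lra).
      assert (Hb : / sqrt E * sqrt E = 1) by (field; lra).
      assert (0 < / sqrt 2) by (apply Rinv_0_lt_compat; lra).
      assert (0 < / sqrt E) by (apply Rinv_0_lt_compat; lra).
      split; intros Hcase; nra. }
    unfold Rmin. destruct (Rle_dec (/ sqrt 2) (L / sqrt E)) as [Hle | Hlt].
    + rewrite Rmax_left by (apply Hcmp; exact Hle). field; lra.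
    + rewrite Rmax_right by (destruct (Rle_dec (sqrt E) (sqrt 2 * L)) as [H|H];
        [exfalso; apply Hlt, Hcmp, H | lra]).
      field; lra.
Qed.

Lemma eta_choice_weight_bounds L E :
  0 < L -> 0 <= E ->
  0 < L / (2 * eta_choice L E) /\ 2 * L ^ 2 <= (L / (2 * eta_choice L E)) ^ 2
  /\ E / (L / (2 * eta_choice L E)) <= L / (2 * eta_choice L E).
Proof.
  intros HL HE. rewrite prox_weight_eta_choice by assumption.
  set (m := Rmax (sqrt 2 * L) (sqrt E)).
  assert (H2L : 0 < sqrt 2 * L) by (apply Rmult_lt_0_compat; [apply sqrt_lt_R0; lra | exact HL]).
  assert (Hm : 0 < m) by (apply Rlt_le_trans with (sqrt 2 * L); [exact H2L | apply Rmax_l]).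
  assert (HL2 : (sqrt 2 * L) ^ 2 <= m ^ 2) by (apply pow_incr; split; [lra | apply Rmax_l]).
  assert (HE2 : sqrt E ^ 2 <= m ^ 2) by (apply pow_incr; split; [apply sqrt_pos | apply Rmax_r]).
  rewrite Rpow_mult_distr, pow2_sqrt in HL2 by lra. rewrite pow2_sqrt in HE2 by lra.
  split; [exact Hm | split; [exact HL2 |]].
  apply Rmult_le_reg_l with m; [exact Hm|].
  replace (m * (E / m)) with E by (field; lra). nra.
Qed.

Theorem mainTheorem4
  (d : nat) (W : vec -> Prop) (L : R) (T : nat)
  (f : nat -> vec -> R) (g : nat -> vec -> vec) (x z : nat -> vec)
  (hW_Rd : forall w, W w -> inRd d w)
  (hW_ball : forall w, W w -> norm2 d w <= 1)
  (hW_convex : W_convex_set d W)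
  (hW_closed : W_closed_set d W)
  (hW0 : W vzero)
  (hL : 0 < L)
  (hf0 : forall w, f 0%nat w = 0)
  (hconv : forall t, (1 <= t <= T)%nat -> convex_fun d (f t))
  (hgrad : forall t w, (t <= T)%nat -> inRd d w -> is_gradient d (f t) (g t w) w)
  (hlip : forall t u v, (1 <= t <= T)%nat -> W u -> W v ->
     norm2 d (vsub (g t u) (g t v)) <= L * norm2 d (vsub u v))
  (hx0 : x 0%nat = vzero) (hz0 : z 0%nat = vzero)
  (hx : forall t, (1 <= t <= T)%nat ->
     is_argmin W (fun w => inner d w (g (t - 1)%nat (x (t - 1)%nat))
        + L / (2 * eta_choice L (sumR T (fun s => (norm2 d (vsub (g (S s) (x s)) (g s (x s)))) ^ 2)))
          * (norm2 d (vsub w (z (t - 1)%nat))) ^ 2) (x t))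
  (hz : forall t, (1 <= t <= T)%nat ->
     is_argmin W (fun w => inner d w (g t (x t))
        + L / (2 * eta_choice L (sumR T (fun s => (norm2 d (vsub (g (S s) (x s)) (g s (x s)))) ^ 2)))
          * (norm2 d (vsub w (z (t - 1)%nat))) ^ 2) (z t)) :
  let EGV := sumR T (fun s => (norm2 d (vsub (g (S s) (x s)) (g s (x s)))) ^ 2) in
  forall u, W u ->
    sumR T (fun s => f (S s) (x (S s))) - sumR T (fun s => f (S s) u)
      <= 2 * Rmax (sqrt 2 * L) (sqrt EGV).
Proof.
  intros EGV u Hu.
  assert (HEGV : 0 <= EGV) by (apply sumR_nonneg; intros; apply pow2_ge_0).
  rewrite <- prox_weight_eta_choice by assumption.
  set (c := L / (2 * eta_choice L EGV)).
  destruct (eta_choice_weight_bounds L EGV hL HEGV) as [Hc [HcL HEc]]; fold c in Hc, HcL, HEc.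
  assert (Hiter : forall t, (t <= T)%nat -> W (x t) /\ W (z t)).
  { intros [|t] Ht; [rewrite hx0, hz0; auto | split; [apply (hx (S t)) | apply (hz (S t))]; lia]. }
  set (Phi := fun t => c * (inner d (vsub u (z t)) (vsub u (z t))
                            + inner d (vsub (z t) (x t)) (vsub (z t) (x t)))).
  assert (Hregret : sumR T (fun s => f (S s) (x (S s))) - sumR T (fun s => f (S s) u)
    <= sumR T (fun s => inner d (g (S s) (x (S s))) (vsub (x (S s)) u))).
  { apply sumR_sub_le; intros s Hs.
    destruct (Hiter (S s) ltac:(lia)) as [Wx _].
    apply convex_gradient_le; [apply hconv; lia | apply hgrad; auto; lia | auto | auto]. }
  assert (HPhi0 : Phi 0%nat <= c).
  { unfold Phi; rewrite hx0, hz0, !inner_vsub_vzero, inner_vzero.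
    pose proof (inner_self_le_one d u (hW_ball u Hu)). nra. }
  assert (HPhiT : 0 <= Phi T).
  { pose proof (inner_self_nonneg d (vsub u (z T))). pose proof (inner_self_nonneg d (vsub (z T) (x T))).
    unfold Phi; nra. }
  assert (HEGV_c : sumR T (fun s => inner d (vsub (g (S s) (x s)) (g s (x s)))
      (vsub (g (S s) (x s)) (g s (x s))) / c) = EGV / c).
  { rewrite sumR_div; f_equal; apply sumR_ext; intros; symmetry; apply norm2_sqr. }
  assert (Hsteps : sumR T (fun s => inner d (g (S s) (x (S s))) (vsub (x (S s)) u)) + Phi T
    <= Phi 0%nat + sumR T (fun s => inner d (vsub (g (S s) (x s)) (g s (x s)))
                                  (vsub (g (S s) (x s)) (g s (x s))) / c)).
  { apply sumR_telescope_le; intros s Hs.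
    destruct (Hiter s ltac:(lia)) as [Wx Wz]. destruct (Hiter (S s) ltac:(lia)) as [Wx' Wz'].
    apply (omp_step d W c L u (x s) (z s) (x (S s)) (z (S s))
      (g s (x s)) (g (S s) (x s)) (g (S s) (x (S s)))); auto; [lra | | | apply hlip; auto; lia].
    - pose proof (hx (S s) ltac:(lia)) as Hprox; rewrite Nat.sub_succ, Nat.sub_0_r in Hprox; exact Hprox.
    - pose proof (hz (S s) ltac:(lia)) as Hprox; rewrite Nat.sub_succ, Nat.sub_0_r in Hprox; exact Hprox. }
  lra.
Qed.
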